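(* Let $p>2$ and let $G_2$ be the spider graph consisting of a center $v_0$ and three legs $v_0x_1x_2\cdots x_p$, $v_0y_1y_2\cdots y_p$, $v_0z_1z_2\cdots z_p$ (paths with $p$ vertices each besides $v_0$); write $x_0=y_0=z_0=v_0$. Let $H_1,\dots,H_{3p}$ be connected graphs, each with at least two vertices, with $m_i=|V(H_i)|$ ordered so that $m_1\le m_2\le\dots\le m_{3p}$. Let $\Gamma=G_2\diamond(H_1,\dots,H_{3p})$ be the generalized edge corona in which, for each $k\in\{0,1,\dots,p-1\}$, every vertex of $H_{3k+1}$ is joined to $x_{p-k}$ and $x_{p-k-1}$, every vertex of $H_{3k+2}$ is joined to $y_{p-k}$ and $y_{p-k-1}$, and every vertex of $H_{3k+3}$ is joined to $z_{p-k}$ and $z_{p-k-1}$ (so $H_{3p-3}$ is the graph joined to $z_1$ and $z_2$, and $H_{3p-2}$ is the graph joined to $x_1$ and $v_0$). Suppose that (i) $\Delta(H_i)\le\delta(H_{i+1})$ for all $i\in\{1,\dots,3p-1\}$; (ii) $d'(x_p)\le\delta'(H_2)$, $d'(y_p)\le\delta'(H_3)$ and $d'(z_p)\le\delta'(H_4)$; (iii) $\Delta'(H_{3p-3})\le |V(H_4)|+1$; (iv) $d'(z_2)\le\delta'(H_{3p-2})$. Then $\Gamma$ is antimagic.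
   Context: All graphs are simple and undirected. A graph $G$ is antimagic if there is a bijection $f:E(G)\to\{1,2,\dots,|E(G)|\}$ such that the vertex sums $w(v)=\sum_{e\ni v}f(e)$ are pairwise distinct over all vertices $v$. For a graph $G$ with $m$ edges $e_1,\dots,e_m$ and graphs $H_1,\dots,H_m$, the generalized edge corona $G\diamond(H_1,\dots,H_m)$ is obtained from disjoint copies of $G,H_1,\dots,H_m$ by joining both end vertices of $e_i$ to every vertex of $H_i$, for each $i$. $\Delta(H)$ and $\delta(H)$ denote the maximum and minimum degree of $H$ itself. For a vertex $v$ of $\Gamma$, $d'(v)$ denotes its degree in $\Gamma$; $\Delta'(H_i)$ and $\delta'(H_i)$ denote the maximum and minimum of $d'(v)$ over $v\in V(H_i)$ (so $d'(v)=\deg_{H_i}(v)+2$ for $v\in V(H_i)$). *)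

From mathcomp Require Import all_boot.
Set Implicit Arguments. Unset Strict Implicit. Unset Printing Implicit Defensive.

Definition simple_graph (V : finType) (adj : rel V) : Prop :=
  symmetric adj /\ irreflexive adj.

Definition edges (V : finType) (adj : rel V) : {set {set V}} :=
  [set S : {set V} | [exists u, exists v, adj u v && (S == [set u; v])]].

Definition deg (V : finType) (adj : rel V) (v : V) : nat := #|[set w | adj v w]|.

Definition vsum (V : finType) (adj : rel V) (f : {set V} -> nat) (v : V) : nat :=
  \sum_(S in edges adj | v \in S) f S.

(* antimagic: a bijection f : E -> {1..|E|} with pairwise distinct vertex sums.
   (An injection of E into {1,..,|E|} is a bijection onto it.) *)
Definition antimagic (V : finType) (adj : rel V) : Prop :=
  exists f : {set V} -> nat,
    [/\ (forall S, S \in edges adj -> 0 < f S <= #|edges adj|),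
        {in edges adj &, injective f} &
        injective (vsum adj f)].

(* vertices: None = v0 ; Some (j, k) = vertex at position k+1 of leg j
   (leg 0 = x, leg 1 = y, leg 2 = z). *)
Definition spider_vertex (p : nat) := option ('I_3 * 'I_p)%type.

Definition spider_adj (p : nat) (a b : spider_vertex p) : bool :=
  match a, b with
  | Some (j, k), Some (j', k') => (j == j') && ((k.+1 == k' :> nat) || (k'.+1 == k :> nat))
  | None, Some (_, k) => (k == 0 :> nat)
  | Some (_, k), None => (k == 0 :> nat)
  | None, None => false
  end.

(* s is the vertex of leg j at position q (position 0 is the center v0) *)
Definition on_leg (p : nat) (j q : nat) (s : spider_vertex p) : bool :=
  match s with
  | None => q == 0
  | Some (j', k) => (j' == j :> nat) && (k.+1 == q)
  end.

(* ---------- the graphs H_1..H_{3p} ----------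
   They are packed into one finite type T with a map part : T -> 'I_(3p)
   (part t = i means t is a vertex of H_{i+1}); eH is the disjoint union of
   their edge relations (edges never leave a part). *)
Definition H_family (p : nat) (T : finType) (part : T -> 'I_(3 * p)) (eH : rel T) : Prop :=
  simple_graph eH /\ (forall u v, eH u v -> part u = part v).

(* attachment: H_{i+1} (0-based i = 3k + j) is joined to the vertices of leg j
   at positions p - k and p - k - 1. *)
Definition attached (p : nat) (T : finType) (part : T -> 'I_(3 * p))
    (s : spider_vertex p) (t : T) : bool :=
  let i := nat_of_ord (part t) in
  on_leg (i %% 3) (p - i %/ 3) s || on_leg (i %% 3) (p - i %/ 3 - 1) s.

Definition Gamma_vertex (p : nat) (T : finType) := (spider_vertex p + T)%type.

Definition Gamma_adj (p : nat) (T : finType) (part : T -> 'I_(3 * p)) (eH : rel T)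
    (a b : Gamma_vertex p T) : bool :=
  match a, b with
  | inl s, inl s' => spider_adj s s'
  | inr u, inr v => eH u v
  | inl s, inr t => attached part s t
  | inr t, inl s => attached part s t
  end.

Definition Hverts (p : nat) (T : finType) (part : T -> 'I_(3 * p)) (i : nat) : {set T} :=
  [set t | nat_of_ord (part t) == i].

Definition legv (p : nat) (j q : nat) : spider_vertex p :=
  if q is q'.+1 then
    (if @insub _ (fun k => k < p) _ q' is Some k then Some (inord j : 'I_3, k) else None)
  else None.

From mathcomp Require Import all_boot zify.
Set Implicit Arguments. Unset Strict Implicit. Unset Printing Implicit Defensive.

(* Label the edges of Gamma by 1, ..., |E| in the following order: first the
   edges inside the H_i, by i; then the spokes, the two edges joining a vertex t
   of H_i to the spider, ordered by i, then by the label sum of t inside H_i,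
   the two spokes of t being consecutive; finally the spider edges, from the
   leaves to the centre. By (i) and m_1 <= ... <= m_3p the label sums inside the
   H_i grow along the spoke order, so the vertex sums of the vertices of the H_i
   increase along it in steps of at least 4; in particular no two of them are
   consecutive integers. Index the spider vertices so that H_(i+1) hangs at
   indices i and i + 3 and the centre comes last: the spider sums increase with
   the index, and the sum at the centre exceeds every other vertex sum.
   Exchanging the two spoke labels of one vertex of H_(i+1) raises the sum at
   index i by one without changing the sums at smaller indices, so these
   exchanges can be chosen index by index to keep every spider sum away from all
   the vertex sums of the H_i. *)

Section EdgeFunctions.
Variables (V : finType) (adj : rel V).

Definition edge_fun (h : V -> V -> nat) (S : {set V}) : nat :=
  \max_(a in S) \max_(b in S) (if a == b then 0 else h a b).

Lemma edge_fun2 h a b : a != b -> h a b = h b a -> edge_fun h [set a; b] = h a b.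
Proof.
move=> nab hab; have nb : a \notin [set b] by rewrite in_set1.
rewrite /edge_fun big_setU1 //= big_set1 !big_setU1 //= !big_set1 !eqxx (negPf nab).
by rewrite eq_sym (negPf nab) hab max0n maxn0 maxnn.
Qed.

Lemma edges_pair a b : adj a b -> [set a; b] \in edges adj.
Proof.
by move=> ab; rewrite inE; apply/existsP; exists a; apply/existsP; exists b; rewrite ab eqxx.
Qed.

Lemma edgesP S : S \in edges adj -> exists a b, adj a b /\ S = [set a; b].
Proof. by rewrite inE => /existsP [a /existsP [b /andP [h /eqP ->]]]; exists a, b. Qed.

Definition edge_symmetric (h : V -> V -> nat) := forall a b, adj a b -> h a b = h b a.

Definition edge_injective (h : V -> V -> nat) :=
  forall a b a' b', adj a b -> adj a' b' -> h a b = h a' b' -> [set a; b] = [set a'; b'].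

Hypothesis adj_sg : simple_graph adj.

Lemma adj_neq a b : adj a b -> a != b.
Proof. by case: adj_sg => _ irr; apply: contraTneq => ->; rewrite irr. Qed.

Lemma edge_fun_edge h a b : edge_symmetric h -> adj a b -> edge_fun h [set a; b] = h a b.
Proof. by move=> hs ab; rewrite edge_fun2 ?adj_neq // hs. Qed.

Lemma vsum_edge_fun h v : edge_symmetric h ->
  vsum adj (edge_fun h) v = \sum_(w | adj v w) h v w.
Proof.
move=> hs; case: adj_sg => sym _.
have edges_at S :
    (S \in edges adj) && (v \in S) = (S \in [set [set v; w] | w in [set w | adj v w]]).
  apply/andP/imsetP => [[/edgesP [a [b [ab ->]]]]|].
    rewrite !inE => /orP [] /eqP vab; subst v; [exists b | exists a]; rewrite ?inE //.
      by rewrite sym.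
    by rewrite setUC.
  by case=> w; rewrite inE => vw ->; rewrite edges_pair // !inE eqxx.
rewrite /vsum (eq_bigl _ _ edges_at) big_imset => [|w w']; last first.
  rewrite !inE => vw vw' e; have : w \in [set v; w'] by rewrite -e !inE eqxx orbT.
  by rewrite !inE eq_sym (negPf (adj_neq vw)) => /eqP.
by apply: eq_big => [w|w]; rewrite inE // => /(edge_fun_edge hs) ->.
Qed.

End EdgeFunctions.

Section Rank.
Variables (X : finType) (A : {set X}) (g : X -> nat).

Definition rank_in (x : nat) : nat := #|[set S in A | g S <= x]|.

Lemma rank_in_mono x y : x <= y -> rank_in x <= rank_in y.
Proof.
move=> xy; apply: subset_leq_card; apply/subsetP => S; rewrite !inE => /andP [-> gS].
exact: leq_trans gS xy.
Qed.

Lemma rank_in_lt x a : a \in A -> x < g a -> rank_in x < rank_in (g a).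
Proof.
move=> aA xa; apply: proper_card; apply/properP; split.
  by apply/subsetP => S; rewrite !inE => /andP [-> gS]; apply: leq_trans gS (ltnW xa).
by exists a; rewrite !inE ?aA ?leqnn // -ltnNge.
Qed.

Lemma rank_in_gt0 a : a \in A -> 0 < rank_in (g a).
Proof. by move=> aA; apply/card_gt0P; exists a; rewrite !inE aA leqnn. Qed.

Lemma rank_in_le_card x : rank_in x <= #|A|.
Proof. by apply: subset_leq_card; apply/subsetP => S; rewrite !inE => /andP []. Qed.

Hypothesis g_inj : {in A &, injective g}.

Lemma rank_inS x a : a \in A -> g a = x.+1 -> rank_in x.+1 = (rank_in x).+1.
Proof.
move=> aA ga; rewrite /rank_in; have -> : [set S in A | g S <= x.+1] = a |: [set S in A | g S <= x].
  apply/setP => S; rewrite !inE; have [->|neSa] := eqVneq S a; first by rewrite ?eqxx aA ga leqnn.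
  rewrite /= leq_eqVlt ltnS; case SA: (S \in A) => //=; case: eqP => //= gS.
  by rewrite -ga in gS; case/eqP: neSa; apply: g_inj.
by rewrite cardsU1 !inE aA ga ltnn.
Qed.

Lemma rank_in_inj a b : a \in A -> b \in A -> rank_in (g a) = rank_in (g b) -> a = b.
Proof.
move=> aA bA e; apply: g_inj => //.
by case: (ltngtP (g a) (g b)) => // [/(rank_in_lt bA)|/(rank_in_lt aA)]; rewrite e ltnn.
Qed.

End Rank.

Section RankLabelling.
Variables (V : finType) (adj : rel V).
Hypothesis adj_sg : simple_graph adj.
Local Notation E := (edges adj).

Variable s0 : V -> V -> nat.
Hypotheses (s0_sym : edge_symmetric adj s0) (s0_inj : edge_injective adj s0).

Definition edge_rank : nat -> nat := rank_in E (edge_fun s0).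

Lemma edge_fun_inj : {in E &, injective (edge_fun s0)}.
Proof.
move=> S S' /edgesP [a [b [ab ->]]] /edgesP [a' [b' [ab' ->]]].
by rewrite !(edge_fun_edge adj_sg s0_sym) //; apply: s0_inj.
Qed.

Lemma edge_rank_lt a b x : adj a b -> x < s0 a b -> edge_rank x < edge_rank (s0 a b).
Proof. by move=> ab; rewrite -(edge_fun_edge adj_sg s0_sym ab); apply/rank_in_lt/edges_pair. Qed.

Lemma edge_rankS a b x : adj a b -> s0 a b = x.+1 -> edge_rank x.+1 = (edge_rank x).+1.
Proof.
move=> ab e; apply: (rank_inS edge_fun_inj (edges_pair ab)).
by rewrite (edge_fun_edge adj_sg s0_sym).
Qed.

Lemma antimagic_edge_rank (s : V -> V -> nat) :
  edge_symmetric adj s -> edge_injective adj s ->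
  (forall a b, adj a b -> exists a' b', adj a' b' /\ s a b = s0 a' b') ->
  injective (vsum adj (edge_fun (fun a b => edge_rank (s a b)))) -> antimagic adj.
Proof.
move=> s_sym s_inj s_s0 vsum_inj.
have lab_sym : edge_symmetric adj (fun a b => edge_rank (s a b)).
  by move=> a b ab /=; rewrite s_sym.
exists (edge_fun (fun a b => edge_rank (s a b))); split => //.
  move=> _ /edgesP [a [b [ab ->]]]; rewrite (edge_fun_edge adj_sg lab_sym) //.
  have [a' [b' [ab' ->]]] := s_s0 _ _ ab.
  by rewrite -(edge_fun_edge adj_sg s0_sym ab') rank_in_le_card rank_in_gt0 ?edges_pair.
move=> _ _ /edgesP [a [b [ab ->]]] /edgesP [a' [b' [ab' ->]]].
rewrite !(edge_fun_edge adj_sg lab_sym) // => e; apply: s_inj => //.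
have [c [d [cd ec]]] := s_s0 _ _ ab; have [c' [d' [cd' ec']]] := s_s0 _ _ ab'.
move: e; rewrite ec ec' -!(edge_fun_edge adj_sg s0_sym) //.
by move/(rank_in_inj edge_fun_inj (edges_pair cd) (edges_pair cd')) => ->.
Qed.

End RankLabelling.

Lemma leq_sum_card (I : finType) (A B : {pred I}) (g h : I -> nat) :
  #|A| <= #|B| -> (forall a b, a \in A -> b \in B -> g a <= h b) ->
  \sum_(a in A) g a <= \sum_(b in B) h b.
Proof.
move=> AB gh; pose G := \max_(a in A) g a.
apply: (@leq_trans (\sum_(a in A) G)); first exact/leq_sum/leq_bigmax_cond.
apply: (@leq_trans (\sum_(b in B) G)); first by rewrite !sum_nat_const leq_mul2r AB orbT.
by apply: leq_sum => b bB; apply/bigmax_leqP => a aA; apply: gh.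
Qed.

Lemma lex_lt a b n m : a < n -> b < m -> a * m + b < n * m.
Proof.
move=> an bm; apply: (@leq_trans (a.+1 * m)); first by rewrite mulSn addnC ltn_add2r.
by rewrite leq_mul2r an orbT.
Qed.

Lemma lex_le a b c d m : b < m -> d < m -> a * m + b <= c * m + d -> a <= c.
Proof.
move=> bm dm /(leq_div2r m); have m_gt0 : 0 < m by apply: leq_ltn_trans bm.
by rewrite !divnMDl // !divn_small ?addn0.
Qed.

Lemma lex_eq a b c d m : b < m -> d < m -> a * m + b = c * m + d -> a = c /\ b = d.
Proof.
move=> bm dm e; have m_gt0 : 0 < m by apply: leq_ltn_trans bm.
split; first by move: (congr1 (divn^~ m) e); rewrite /= !divnMDl // !divn_small ?addn0.
by move: (congr1 (modn^~ m) e); rewrite /= !modnMDl !modn_small.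
Qed.

Section SpiderIndex.
Variable p : nat.
Local Notation SV := (spider_vertex p).

(* Position q of leg j gets index 3 (p - q) + j and the centre 3 p: spider edges
   join c and min (c + 3) (3 p), and H_(i+1) is attached at i and min (i + 3) (3 p). *)
Definition sidx (s : SV) : nat := if s is Some (j, k) then 3 * (p.-1 - k) + j else 3 * p.

Definition spider_of (i : nat) : SV := legv p (i %% 3) (p - i %/ 3).

Lemma sidx_le s : sidx s <= 3 * p.
Proof. by case: s => [[j k]|] //=; have := ltn_ord j; have := ltn_ord k; lia. Qed.

Lemma sidx_spider_of i : sidx (spider_of i) = minn i (3 * p).
Proof.
rewrite /spider_of /legv; case eq_q: (p - i %/ 3) => [|q]; first by rewrite /=; lia.
case: insubP => [k _ vk|]; last by lia.
have {}vk : nat_of_ord k = q := vk.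
by rewrite /= inordK; lia.
Qed.

Lemma spider_ofK : cancel sidx spider_of.
Proof.
case=> [[j k]|]; rewrite /spider_of /legv /=; last by have -> : p - 3 * p %/ 3 = 0 by lia.
have := ltn_ord j; have := ltn_ord k => kp j3.
have -> : p - (3 * (p.-1 - k) + j) %/ 3 = k.+1 by lia.
rewrite insubT /=; congr (Some (_, _)); apply: val_inj => //=.
by rewrite inordK; lia.
Qed.

Lemma sidx_inj : injective sidx.
Proof. exact: can_inj spider_ofK. Qed.

Lemma eq_spider_of s i : (s == spider_of i) = (sidx s == minn i (3 * p)).
Proof.
apply/eqP/eqP => [->|e]; first by rewrite sidx_spider_of.
by apply: sidx_inj; rewrite e sidx_spider_of; lia.
Qed.

Lemma spider_adjE s s' : spider_adj s s' =
  ((sidx s < 3 * p) && (sidx s' == minn (sidx s + 3) (3 * p))) ||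
  ((sidx s' < 3 * p) && (sidx s == minn (sidx s' + 3) (3 * p))).
Proof.
case: s => [[j k]|]; case: s' => [[j' k']|] /=.
- have := ltn_ord j; have := ltn_ord k; have := ltn_ord j'; have := ltn_ord k'.
  by change (j == j') with (nat_of_ord j == nat_of_ord j'); lia.
- by have := ltn_ord j; have := ltn_ord k; lia.
- by have := ltn_ord j'; have := ltn_ord k'; lia.
- by lia.
Qed.

End SpiderIndex.

Lemma attachedE p (T : finType) (part : T -> 'I_(3 * p)) s t :
  attached part s t = (sidx s == part t) || (sidx s == minn (part t + 3) (3 * p)).
Proof.
have := ltn_ord (part t); rewrite /attached; case: s => [[j k]|] /=; last by lia.
by have := ltn_ord j; have := ltn_ord k; lia.
Qed.

Section Corona.
Variables (p : nat) (T : finType) (part : T -> 'I_(3 * p)) (eH : rel T).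
Hypothesis p_gt1 : 1 < p.
Hypothesis eH_family : H_family part eH.

Local Notation V := (Gamma_vertex p T).
Local Notation adj := (Gamma_adj part eH).
Local Notation E := (edges adj).

Lemma part_adj u v : eH u v -> part u = part v.
Proof. by case: eH_family => _; apply. Qed.

Lemma Gamma_simple : simple_graph adj.
Proof.
case: eH_family => [[sym irr] _]; split.
  by case=> [s|u] [s'|v] //=; rewrite ?spider_adjE 1?orbC // sym.
by case=> [s|u] /=; rewrite ?irr // spider_adjE; lia.
Qed.

Definition idx (t : T) : nat := enum_rank t.

Definition pair_code u v := minn (idx u) (idx v) * #|T| + maxn (idx u) (idx v).

Definition inner_score u v := part u * (#|T| * #|T|) + pair_code u v.

Definition spoke_base := 3 * p * (#|T| * #|T|).

Definition inner_edge_score (a b : V) : nat :=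
  match a, b with inr u, inr v => inner_score u v | _, _ => spoke_base end.

(* The edges inside the H_i get the smallest labels, so their labels are known
   before the spokes are ordered (inner_rank_eq). *)
Definition inner_sum t := \sum_(w | eH t w) rank_in E (edge_fun inner_edge_score) (inner_score t w).

Definition inner_sum_bound := (\sum_t inner_sum t).+1.

Definition spoke_key t := part t * (inner_sum_bound * #|T|) + (inner_sum t * #|T| + idx t).

Definition spider_base := spoke_base + 2 * (3 * p * (inner_sum_bound * #|T|)).

Definition near (s : spider_vertex p) t := sidx s == minn (part t + 3) (3 * p).

(* The bit [near s t (+) fl t] gives the spoke of t at s the larger of the two
   consecutive labels of t; flipping [fl t] exchanges them. *)
Definition score (fl : T -> bool) (a b : V) : nat :=
  match a, b with
  | inr u, inr v => inner_score u v
  | inl s, inr t | inr t, inl s => spoke_base + (2 * spoke_key t + (near s t (+) fl t))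
  | inl s, inl s' => spider_base + minn (sidx s) (sidx s')
  end.

Lemma idx_lt t : idx t < #|T|.
Proof. exact: ltn_ord. Qed.

Lemma idx_inj : injective idx.
Proof. by move=> u v /ord_inj /enum_rank_inj. Qed.

Lemma pair_code_lt u v : pair_code u v < #|T| * #|T|.
Proof. by apply: lex_lt; have := idx_lt u; have := idx_lt v; lia. Qed.

Lemma pair_code_eq u v u' v' : pair_code u v = pair_code u' v' ->
  (u = u' /\ v = v') \/ (u = v' /\ v = u').
Proof.
have maxn_lt x y : maxn (idx x) (idx y) < #|T| by have := idx_lt x; have := idx_lt y; lia.
move=> /(lex_eq (maxn_lt u v) (maxn_lt u' v')) [e1 e2].
have : (idx u = idx u' /\ idx v = idx v') \/ (idx u = idx v' /\ idx v = idx u') by lia.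
by case=> [[/idx_inj -> /idx_inj ->]|[/idx_inj -> /idx_inj ->]]; [left|right].
Qed.

Lemma inner_score_lt u v : inner_score u v < spoke_base.
Proof. by apply: lex_lt => //; apply: pair_code_lt. Qed.

Lemma inner_score_eq u v u' v' : inner_score u v = inner_score u' v' ->
  (u = u' /\ v = v') \/ (u = v' /\ v = u').
Proof. by case/(lex_eq (pair_code_lt u v) (pair_code_lt u' v')) => _ /pair_code_eq. Qed.

Lemma inner_sum_lt t : inner_sum t < inner_sum_bound.
Proof. by rewrite ltnS (bigD1 t) //= leq_addr. Qed.

Lemma spoke_key_lt t : spoke_key t < 3 * p * (inner_sum_bound * #|T|).
Proof. by apply: lex_lt => //; apply: lex_lt; [apply: inner_sum_lt | apply: idx_lt]. Qed.

Lemma spoke_key_inj : injective spoke_key.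
Proof.
have lt t := lex_lt (inner_sum_lt t) (idx_lt t).
by move=> u v /(lex_eq (lt u) (lt v)) [_ /(lex_eq (idx_lt u) (idx_lt v)) [_ /idx_inj]].
Qed.

Lemma spoke_key_part u v : spoke_key u <= spoke_key v -> part u <= part v.
Proof. by apply: lex_le; apply: lex_lt; rewrite ?inner_sum_lt ?idx_lt. Qed.

Lemma part_spoke_key u v : part u < part v -> spoke_key u < spoke_key v.
Proof.
move=> uv; apply: leq_trans (leq_addr _ _); apply: lex_lt => //.
by apply: lex_lt; rewrite ?inner_sum_lt ?idx_lt.
Qed.

Lemma spoke_key_inner_sum u v :
  part u = part v -> spoke_key u <= spoke_key v -> inner_sum u <= inner_sum v.
Proof. by rewrite /spoke_key => ->; rewrite leq_add2l; apply: lex_le; apply: idx_lt. Qed.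

Definition edge_kind (a b : V) : nat :=
  match a, b with inr _, inr _ => 0 | inl _, inl _ => 2 | _, _ => 1 end.

Lemma score_lt_spoke_base fl a b : (score fl a b < spoke_base) = (edge_kind a b == 0).
Proof. by case: a b => [s|u] [s'|v] /=; rewrite ?inner_score_lt // /spider_base; lia. Qed.

Lemma score_lt_spider_base fl a b : (score fl a b < spider_base) = (edge_kind a b < 2).
Proof.
case: a b => [s|u] [s'|v] /=; rewrite /spider_base.
- by lia.
- by have := spoke_key_lt v; lia.
- by have := spoke_key_lt u; lia.
- by have := inner_score_lt u v; lia.
Qed.

Lemma edge_kind_score fl a b a' b' :
  score fl a b = score fl a' b' -> edge_kind a b = edge_kind a' b'.
Proof.
move=> e; have := score_lt_spoke_base fl a b; have := score_lt_spider_base fl a b.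
rewrite e !score_lt_spoke_base !score_lt_spider_base.
by case: a b a' b' {e} => [?|?] [?|?] [?|?] [?|?].
Qed.

Lemma score_sym fl : edge_symmetric adj (score fl).
Proof.
case=> [s|u] [s'|v] //= uv; first by rewrite minnC.
by rewrite /inner_score /pair_code (part_adj uv) minnC maxnC.
Qed.

Lemma spoke_score_inj fl s t s' t' : attached part s t -> attached part s' t' ->
  2 * spoke_key t + (near s t (+) fl t) = 2 * spoke_key t' + (near s' t' (+) fl t') ->
  s = s' /\ t = t'.
Proof.
move=> st st' e; have tt' : t = t'.
  by apply: spoke_key_inj; move: e; case: (_ (+) _); case: (_ (+) _); lia.
subst t'; split => //; apply: sidx_inj.
have : near s t = near s' t by move: e; case: (fl t); case: (near s t); case: (near s' t); lia.
by move: st st'; rewrite !attachedE /near; lia.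
Qed.

Lemma spider_score_inj s1 s2 s1' s2' : spider_adj s1 s2 -> spider_adj s1' s2' ->
  minn (sidx s1) (sidx s2) = minn (sidx s1') (sidx s2') ->
  [set inl s1; inl s2] = [set inl s1'; inl s2'] :> {set V}.
Proof.
rewrite !spider_adjE => h h' e.
have : (sidx s1 = sidx s1' /\ sidx s2 = sidx s2') \/ (sidx s1 = sidx s2' /\ sidx s2 = sidx s1').
  by lia.
by case=> [[/sidx_inj -> /sidx_inj ->]|[/sidx_inj -> /sidx_inj ->]] //; rewrite setUC.
Qed.

Lemma score_inj fl : edge_injective adj (score fl).
Proof.
move=> a b a' b' ab ab' e; have := edge_kind_score e.
case: a b a' b' ab ab' e => [s|u] [s'|v] [r|u'] [r'|v'] //= ab ab' e _.
- exact: spider_score_inj (addnI e).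
- by have [-> ->] := spoke_score_inj ab ab' (addnI e).
- by have [-> ->] := spoke_score_inj ab ab' (addnI e); rewrite setUC.
- by have [-> ->] := spoke_score_inj ab ab' (addnI e); rewrite setUC.
- by have [-> ->] := spoke_score_inj ab ab' (addnI e).
- by case: (inner_score_eq e) => [[-> ->]|[-> ->]] //; rewrite setUC.
Qed.

Definition noflip : T -> bool := fun=> false.

Definition spoke_score t := spoke_base + 2 * spoke_key t.

Lemma attached_spider_of s t :
  attached part s t = (s == spider_of p (part t)) || (s == spider_of p (part t + 3)).
Proof. by rewrite attachedE !eq_spider_of; have := ltn_ord (part t); lia. Qed.

Lemma spider_of_far_near t : spider_of p (part t) != spider_of p (part t + 3).
Proof. by rewrite eq_spider_of sidx_spider_of; have := ltn_ord (part t); lia. Qed.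

Lemma adj_far t : adj (inl (spider_of p (part t))) (inr t).
Proof. by rewrite /= attached_spider_of eqxx. Qed.

Lemma adj_near t : adj (inl (spider_of p (part t + 3))) (inr t).
Proof. by rewrite /= attached_spider_of eqxx orbT. Qed.

Lemma score_far fl t : score fl (inl (spider_of p (part t))) (inr t) = spoke_score t + fl t.
Proof.
rewrite /= /near !sidx_spider_of addnA; have := ltn_ord (part t) => part_lt.
by have -> // : (minn (part t) (3 * p) == minn (part t + 3) (3 * p)) = false by lia.
Qed.

Lemma score_near fl t : score fl (inl (spider_of p (part t + 3))) (inr t) = spoke_score t + ~~ fl t.
Proof. by rewrite /= /near sidx_spider_of eqxx addnA. Qed.

Lemma adj_spider c : c < 3 * p -> adj (inl (spider_of p c)) (inl (spider_of p (c + 3))).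
Proof. by move=> c_lt; rewrite /= spider_adjE !sidx_spider_of; lia. Qed.

Lemma score_spider fl c : c < 3 * p ->
  score fl (inl (spider_of p c)) (inl (spider_of p (c + 3))) = spider_base + c.
Proof. by move=> c_lt; rewrite /= !sidx_spider_of; congr addn; lia. Qed.

Lemma score_noflip fl a b : adj a b -> exists a' b', adj a' b' /\ score fl a b = score noflip a' b'.
Proof.
have spoke s t : exists a' b', adj a' b' /\
    spoke_base + (2 * spoke_key t + (near s t (+) fl t)) = score noflip a' b'.
  case: (near s t (+) fl t).
    by exists (inl (spider_of p (part t + 3))), (inr t); rewrite adj_near score_near addnA.
  by exists (inl (spider_of p (part t))), (inr t); rewrite adj_far score_far addnA.
case: a b => [s|u] [s'|v] ab; [by exists (inl s), (inl s') | exact: spoke | exact: spoke |].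
by exists (inr u), (inr v).
Qed.

Local Notation rank := (edge_rank adj (score noflip)).

Definition label fl a b := rank (score fl a b).

Definition spoke_rank t := rank (spoke_score t).

Lemma rank_lt a b x : adj a b -> x < score noflip a b -> rank x < rank (score noflip a b).
Proof. exact: (edge_rank_lt Gamma_simple (score_sym noflip)). Qed.

Lemma spoke_rankS t : rank (spoke_score t).+1 = (spoke_rank t).+1.
Proof.
rewrite /spoke_rank.
apply: (edge_rankS Gamma_simple (score_sym noflip) (@score_inj noflip) (adj_near t)).
by rewrite score_near addn1.
Qed.

Lemma label_spoke fl s t : label fl (inl s) (inr t) = spoke_rank t + (near s t (+) fl t).
Proof.
rewrite /label /= -/(spoke_key t) addnA -/(spoke_score t).
by case: (_ (+) _); rewrite ?addn0 ?addn1 ?spoke_rankS.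
Qed.

Lemma vsum_label fl v : vsum adj (edge_fun (label fl)) v = \sum_(w | adj v w) label fl v w.
Proof.
by rewrite vsum_edge_fun //; [apply: Gamma_simple | move=> a b ab; rewrite /label score_sym].
Qed.

Lemma inner_rank_eq x : x < spoke_base -> rank_in E (edge_fun inner_edge_score) x = rank x.
Proof.
move=> x_lt; apply: eq_card => S; rewrite !inE; case: (boolP [exists _, _]) => //= SE.
have /edgesP [a [b [ab ->]]] : S \in E by rewrite inE.
have inner_sym : edge_symmetric adj inner_edge_score.
  case=> [?|u] [?|v] //= uv.
  by rewrite /inner_score /pair_code (part_adj (uv : eH u v)) minnC maxnC.
rewrite !(edge_fun_edge Gamma_simple) //; last exact: score_sym.
by have := score_lt_spoke_base noflip a b; case: a b ab => [?|?] [?|?] //= _; lia.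
Qed.

Lemma inner_sumE t : inner_sum t = \sum_(w | eH t w) rank (inner_score t w).
Proof. by apply: eq_bigr => w _; rewrite inner_rank_eq ?inner_score_lt. Qed.

Definition Hvertex_sum t := inner_sum t + spoke_rank t + (spoke_rank t).+1.

Lemma vsum_Hvertex fl t : vsum adj (edge_fun (label fl)) (inr t) = Hvertex_sum t.
Proof.
rewrite vsum_label big_sumType /=.
rewrite (eq_bigl (mem [set spider_of p (part t); spider_of p (part t + 3)])); last first.
  by move=> s; rewrite attached_spider_of !inE.
rewrite big_setU1 ?inE ?spider_of_far_near //= big_set1.
rewrite /label -!(score_sym _ (adj_far t)) -!(score_sym _ (adj_near t)) -!/(label _ _ _).
rewrite !label_spoke /near !sidx_spider_of /Hvertex_sum inner_sumE.
by have := ltn_ord (part t); case: (fl t); rewrite /=; lia.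
Qed.

Definition spider_rank c := rank (spider_base + c).

Lemma vsum_spider_split fl s : vsum adj (edge_fun (label fl)) (inl s) =
  \sum_(s' | spider_adj s s') rank (spider_base + minn (sidx s) (sidx s')) +
  \sum_(t | attached part s t) label fl (inl s) (inr t).
Proof. by rewrite vsum_label big_sumType. Qed.

Lemma spider_edges_sum i : i < 3 * p ->
  \sum_(s' | spider_adj (spider_of p i) s')
     rank (spider_base + minn (sidx (spider_of p i)) (sidx s')) =
  spider_rank i + (if 3 <= i then spider_rank (i - 3) else 0).
Proof.
move=> i_lt; rewrite (bigD1 (spider_of p (i + 3))); last first.
  by rewrite spider_adjE !sidx_spider_of; lia.
rewrite !sidx_spider_of /spider_rank.
have -> : minn (minn i (3 * p)) (minn (i + 3) (3 * p)) = i by lia.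
have leaf_side s' : spider_adj (spider_of p i) s' && (s' != spider_of p (i + 3)) =
                    (3 <= i) && (s' == spider_of p (i - 3)).
  by rewrite spider_adjE !eq_spider_of !sidx_spider_of; have := sidx_le s'; lia.
congr addn; rewrite (eq_bigl _ _ leaf_side); case: ifP => i_ge3; last by rewrite big_pred0.
by rewrite big_pred1_eq sidx_spider_of; congr (rank (_ + _)); lia.
Qed.

Definition spoke_sum (fl : T -> bool) i := \sum_(t in Hverts part i) (spoke_rank t + fl t).

Lemma spokes_sum fl i : i < 3 * p ->
  \sum_(t | attached part (spider_of p i) t) label fl (inl (spider_of p i)) (inr t) =
  spoke_sum fl i + (if 3 <= i then spoke_sum (fun t => ~~ fl t) (i - 3) else 0).
Proof.
move=> i_lt; rewrite big_mkcond /spoke_sum [X in _ = X + _]big_mkcond.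
case: ifP => i_ge3; [rewrite [X in _ = _ + X]big_mkcond -big_split | rewrite addn0];
  apply: eq_bigr => t _ /=; have := ltn_ord (part t);
  rewrite attachedE label_spoke /near !sidx_spider_of !inE;
  by repeat case: ifP; case: (fl t) => /=; lia.
Qed.

Definition leaf_sum fl i :=
  if 3 <= i then spider_rank (i - 3) + spoke_sum (fun t => ~~ fl t) (i - 3) else 0.

Lemma vsum_spider fl i : i < 3 * p ->
  vsum adj (edge_fun (label fl)) (inl (spider_of p i)) =
  spider_rank i + spoke_sum fl i + leaf_sum fl i.
Proof.
move=> i_lt; rewrite vsum_spider_split spider_edges_sum // spokes_sum // /leaf_sum.
by case: ifP; lia.
Qed.

Lemma vsum_center_ge fl :
  spider_rank (3 * p - 1) + spider_rank (3 * p - 2) +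
  (spoke_sum (fun t => ~~ fl t) (3 * p - 1) + spoke_sum (fun t => ~~ fl t) (3 * p - 2)) <=
  vsum adj (edge_fun (label fl)) (inl None).
Proof.
rewrite vsum_spider_split; apply: leq_add.
  rewrite (bigD1 (spider_of p (3 * p - 1))); last by rewrite spider_adjE sidx_spider_of /=; lia.
  rewrite (bigD1 (spider_of p (3 * p - 2))); last first.
    by rewrite spider_adjE !eq_spider_of !sidx_spider_of /=; lia.
  rewrite !sidx_spider_of /spider_rank /= addnA.
  have -> : minn (3 * p) (minn (3 * p - 1) (3 * p)) = 3 * p - 1 by lia.
  have -> : minn (3 * p) (minn (3 * p - 2) (3 * p)) = 3 * p - 2 by lia.
  exact: leq_addr.
rewrite /spoke_sum [X in _ <= X]big_mkcond [X in X + _ <= _]big_mkcond [X in _ + X <= _]big_mkcond.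
rewrite -big_split; apply: leq_sum => t _ /=; have := ltn_ord (part t).
rewrite attachedE label_spoke /near !inE /=.
by repeat case: ifP; case: (fl t) => /=; lia.
Qed.

Lemma spoke_rank_far t : spoke_rank t = rank (score noflip (inl (spider_of p (part t))) (inr t)).
Proof. by rewrite score_far addn0. Qed.

Lemma spoke_rank_lt t u : spoke_key t < spoke_key u -> (spoke_rank t).+1 < spoke_rank u.
Proof.
move=> tu; rewrite -spoke_rankS spoke_rank_far; apply: rank_lt (adj_far u) _.
by rewrite score_far /spoke_score; lia.
Qed.

Lemma spoke_rank_lt_spider t c : c < 3 * p -> (spoke_rank t).+1 < spider_rank c.
Proof.
move=> c_lt; rewrite -spoke_rankS /spider_rank -(score_spider noflip c_lt).
apply: rank_lt (adj_spider c_lt) _; rewrite score_spider // /spoke_score /spider_base.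
by have := spoke_key_lt t; lia.
Qed.

Lemma spider_rank_lt c d : c < d -> d < 3 * p -> spider_rank c < spider_rank d.
Proof.
move=> cd d_lt; rewrite /spider_rank -(score_spider noflip d_lt).
by apply: rank_lt (adj_spider d_lt) _; rewrite score_spider //; lia.
Qed.

Lemma inner_rank_le_spoke u w t : rank (inner_score u w) <= spoke_rank t.
Proof. by apply: rank_in_mono; have := inner_score_lt u w; rewrite /spoke_score; lia. Qed.

Hypothesis Hverts_gt0 : forall i : 'I_(3 * p), 0 < #|Hverts part i|.
Hypothesis card_Hverts_mono :
  forall i j : 'I_(3 * p), i <= j -> #|Hverts part i| <= #|Hverts part j|.
Hypothesis deg_Hverts_mono : forall (i : nat) (u v : T), i.+1 < 3 * p ->
  u \in Hverts part i -> v \in Hverts part i.+1 -> deg eH u <= deg eH v.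

Lemma Hverts_nonempty i : i < 3 * p -> exists t, t \in Hverts part i.
Proof. by move=> i_lt; have /card_gt0P := Hverts_gt0 (Ordinal i_lt). Qed.

Lemma card_Hverts_le i j : i <= j -> j < 3 * p -> #|Hverts part i| <= #|Hverts part j|.
Proof.
move=> ij j_lt; have i_lt := leq_ltn_trans ij j_lt.
exact: (card_Hverts_mono (i := Ordinal i_lt) (j := Ordinal j_lt)).
Qed.

Lemma deg_Hverts_lt i j t u : i < j -> j < 3 * p ->
  t \in Hverts part i -> u \in Hverts part j -> deg eH t <= deg eH u.
Proof.
move=> ij j_lt tH; elim: j ij j_lt u => // j IH.
rewrite ltnS leq_eqVlt => /orP [/eqP <-|ij] j_lt u uH; first exact: deg_Hverts_mono tH uH.
have [w wH] := Hverts_nonempty (ltnW j_lt).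
exact: leq_trans (IH ij (ltnW j_lt) w wH) (deg_Hverts_mono j_lt wH uH).
Qed.

Lemma Hverts_part t : t \in Hverts part (part t).
Proof. by rewrite inE. Qed.

Lemma inner_sum_mono t u : spoke_key t < spoke_key u -> inner_sum t <= inner_sum u.
Proof.
move=> tu; have := spoke_key_part (ltnW tu); rewrite leq_eqVlt => /orP [/eqP e|ptu].
  by apply: spoke_key_inner_sum (ltnW tu); apply: val_inj.
rewrite !inner_sumE; apply: leq_sum_card.
  by have := deg_Hverts_lt ptu (ltn_ord _) (Hverts_part t) (Hverts_part u); rewrite /deg !cardsE.
move=> w w' _ _; apply: rank_in_mono; rewrite /inner_score; apply: ltnW.
by apply: leq_trans (leq_addr _ _); apply: lex_lt => //; apply: pair_code_lt.
Qed.

Lemma Hvertex_sum_gap t u : spoke_key t < spoke_key u -> Hvertex_sum t + 4 <= Hvertex_sum u.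
Proof.
by move=> tu; have := inner_sum_mono tu; have := spoke_rank_lt tu; rewrite /Hvertex_sum; lia.
Qed.

Lemma Hvertex_sum_inj : injective Hvertex_sum.
Proof.
move=> t u e; apply: spoke_key_inj.
by case: (ltngtP (spoke_key t) (spoke_key u)) => // /Hvertex_sum_gap; rewrite e; lia.
Qed.

Lemma Hvertex_sum_neq_succ t u : Hvertex_sum u != (Hvertex_sum t).+1.
Proof.
case: (ltngtP (spoke_key t) (spoke_key u)) => [/Hvertex_sum_gap|/Hvertex_sum_gap|];
  [lia | lia | move/spoke_key_inj ->; lia].
Qed.

Definition Hrep i : option T := [pick t in Hverts part i].

Definition flips (F : nat -> bool) (t : T) : bool := (Hrep (part t) == Some t) && F (part t).

Lemma sum_flips F i : i < 3 * p -> \sum_(t in Hverts part i) flips F t = F i.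
Proof.
move=> i_lt; have [t0 t0H] := Hverts_nonempty i_lt.
have [r rH rep_i] : exists2 r, r \in Hverts part i & Hrep i = Some r.
  by rewrite /Hrep; case: pickP => [r|/(_ t0)]; [exists r | rewrite t0H].
rewrite (bigD1 r) //= big1 ?addn0 => [|t /andP [tH tr]]; rewrite /flips.
  by move: rH; rewrite inE => /eqP ->; rewrite rep_i eqxx.
by move: tH; rewrite inE => /eqP ->; rewrite rep_i (inj_eq (@Some_inj _)) eq_sym (negPf tr).
Qed.

Lemma spoke_sum_flips F i : i < 3 * p ->
  spoke_sum (flips F) i = \sum_(t in Hverts part i) spoke_rank t + F i.
Proof. by move=> i_lt; rewrite /spoke_sum big_split /= sum_flips. Qed.

Lemma spoke_rank_sum_le fl i : \sum_(t in Hverts part i) spoke_rank t <= spoke_sum fl i.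
Proof. by apply: leq_sum => t _; apply: leq_addr. Qed.

Lemma leq_spoke_sum fl fl' i j : i < j -> j < 3 * p -> spoke_sum fl i <= spoke_sum fl' j.
Proof.
move=> ij j_lt; apply: leq_sum_card; first exact: card_Hverts_le (ltnW ij) j_lt.
move=> t u; rewrite !inE => /eqP pt /eqP pu.
have /spoke_rank_lt : spoke_key t < spoke_key u by apply: part_spoke_key; rewrite pt pu.
by case: (fl t); case: (fl' u) => /=; lia.
Qed.

Definition spider_sum F i := vsum adj (edge_fun (label (flips F))) (inl (spider_of p i)).

Lemma spider_of_center : spider_of p (3 * p) = None.
Proof. by apply: sidx_inj; rewrite sidx_spider_of minnn. Qed.

Lemma leaf_sum_mono fl i : i.+1 < 3 * p -> leaf_sum fl i <= leaf_sum fl i.+1.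
Proof.
rewrite /leaf_sum => i_lt; case: ifP => // i_ge3; rewrite ifT; last exact: leqW.
have -> : i.+1 - 3 = (i - 3).+1 by lia.
by apply: leq_add; [apply/ltnW/spider_rank_lt | apply: leq_spoke_sum]; lia.
Qed.

Lemma spider_sum_step F i : i.+1 < 3 * p -> spider_sum F i < spider_sum F i.+1.
Proof.
move=> i_lt; rewrite /spider_sum !vsum_spider //; last exact: ltnW.
have := spider_rank_lt (ltnSn i) i_lt; have := leq_spoke_sum (flips F) (flips F) (ltnSn i) i_lt.
by have := leaf_sum_mono (flips F) i_lt; lia.
Qed.

Lemma spider_sum_lt_center F : spider_sum F (3 * p - 1) < spider_sum F (3 * p).
Proof.
have i_lt : 3 * p - 1 < 3 * p by lia.
rewrite /spider_sum spider_of_center vsum_spider // /leaf_sum ifT; last by lia.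
apply: leq_trans (vsum_center_ge (flips F)); rewrite spoke_sum_flips //.
have := spoke_rank_sum_le (fun t => ~~ flips F t) (3 * p - 1).
have := @spider_rank_lt (3 * p - 1 - 3) (3 * p - 3) ltac:(lia) ltac:(lia).
have := @spider_rank_lt (3 * p - 3) (3 * p - 2) ltac:(lia) ltac:(lia).
have := @leq_spoke_sum (fun t => ~~ flips F t) (fun t => ~~ flips F t) (3 * p - 1 - 3) (3 * p - 2)
  ltac:(lia) ltac:(lia).
by case: (F _); lia.
Qed.

Lemma Hvertex_sum_lt_center F u : Hvertex_sum u < spider_sum F (3 * p).
Proof.
rewrite /spider_sum spider_of_center; apply: leq_trans (vsum_center_ge (flips F)).
have := @spoke_rank_lt_spider u (3 * p - 1) ltac:(lia).
have := @spoke_rank_lt_spider u (3 * p - 2) ltac:(lia).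
suff : inner_sum u <= spoke_sum (fun t => ~~ flips F t) (3 * p - 1) by rewrite /Hvertex_sum; lia.
rewrite inner_sumE; apply: leq_sum_card => [|w t _ _].
  have nbr_le : #|eH u| <= #|Hverts part (part u)|.
    by apply/subset_leq_card/subsetP => w; rewrite !inE => /part_adj ->.
  by apply: leq_trans nbr_le (card_Hverts_le _ _); have := ltn_ord (part u); lia.
exact: leq_trans (inner_rank_le_spoke u w t) (leq_addr _ _).
Qed.

Lemma spider_sum_succ F i : i < 3 * p -> spider_sum F i < spider_sum F i.+1.
Proof.
move=> i_lt; case: (ltnP i.+1 (3 * p)) => [|i_ge]; first exact: spider_sum_step.
have -> : i = 3 * p - 1 by lia.
have -> : (3 * p - 1).+1 = 3 * p by lia.
exact: spider_sum_lt_center.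
Qed.

Lemma spider_sum_mono F i j : i < j -> j <= 3 * p -> spider_sum F i < spider_sum F j.
Proof.
elim: j => // j IH; rewrite ltnS leq_eqVlt => /orP [/eqP -> | ij] j_lt.
  exact: spider_sum_succ.
exact: ltn_trans (IH ij (ltnW j_lt)) (spider_sum_succ F j_lt).
Qed.

Definition set_flip (F : nat -> bool) n b k := if k == n then b else F k.

Lemma spider_sum_set_flip_lt F n b i : i < n -> spider_sum (set_flip F n b) i = spider_sum F i.
Proof.
move=> i_lt; rewrite /spider_sum !vsum_spider_split; congr addn; apply: eq_bigr => t.
rewrite attachedE sidx_spider_of !label_spoke /flips /set_flip => at_i.
by rewrite ifF //; have := ltn_ord (part t); lia.
Qed.

Lemma spider_sum_set_flip F n : n < 3 * p ->
  spider_sum (set_flip F n true) n = (spider_sum (set_flip F n false) n).+1.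
Proof.
move=> n_lt; rewrite /spider_sum !vsum_spider // !spoke_sum_flips // /leaf_sum.
case: ifP => n_ge3; last by rewrite /set_flip eqxx /=; lia.
have -> : spoke_sum (fun t => ~~ flips (set_flip F n true) t) (n - 3) =
          spoke_sum (fun t => ~~ flips (set_flip F n false) t) (n - 3).
  by apply: eq_bigr => t; rewrite inE /flips /set_flip => /eqP ->; rewrite !ifF //; lia.
by rewrite /set_flip eqxx /=; lia.
Qed.

Lemma avoiding_flips : exists F, forall i t, i < 3 * p -> spider_sum F i != Hvertex_sum t.
Proof.
suff avoid n : exists F, forall i t, i < n -> i < 3 * p -> spider_sum F i != Hvertex_sum t.
  by have [F avoid_F] := avoid (3 * p); exists F => i t i_lt; apply: avoid_F.
elim: n => [|n [F avoid_F]]; first by exists (fun=> false).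
case: (ltnP n (3 * p)) => [n_lt|n_ge]; last by exists F => i t i_lt i_lt3; apply: avoid_F; lia.
have below b i t : i < n -> spider_sum (set_flip F n b) i != Hvertex_sum t.
  by move=> i_lt; rewrite spider_sum_set_flip_lt //; apply: avoid_F; lia.
case: (boolP [forall t, spider_sum (set_flip F n false) n != Hvertex_sum t]) => [/forallP avoid_n|].
  exists (set_flip F n false) => i t; rewrite ltnS leq_eqVlt => /orP [/eqP -> _|i_lt _].
    exact: avoid_n.
  exact: below.
move=> /forallPn [t0 /negPn /eqP hit].
exists (set_flip F n true) => i t; rewrite ltnS leq_eqVlt => /orP [/eqP -> _|i_lt _].
  by rewrite spider_sum_set_flip // hit eq_sym Hvertex_sum_neq_succ.
exact: below.
Qed.

Theorem Gamma_antimagic : antimagic adj.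
Proof.
have [F avoid] := avoiding_flips.
apply: (antimagic_edge_rank Gamma_simple (score_sym noflip) (@score_inj noflip)
  (score_sym (flips F)) (@score_inj (flips F)) (@score_noflip (flips F))).
have vsum_spider_sum s : vsum adj (edge_fun (label (flips F))) (inl s) = spider_sum F (sidx s).
  by rewrite /spider_sum spider_ofK.
have spider_neq_Hvertex s t : vsum adj (edge_fun (label (flips F))) (inl s) != Hvertex_sum t.
  rewrite vsum_spider_sum; have := sidx_le s.
  rewrite leq_eqVlt => /orP [/eqP ->|]; last exact: avoid.
  by rewrite eq_sym ltn_eqF ?Hvertex_sum_lt_center.
case=> [s|t] [s'|u]; rewrite ?vsum_Hvertex => e.
- congr inl; apply: sidx_inj; move: e; rewrite !vsum_spider_sum.
  by case: (ltngtP (sidx s) (sidx s')) => // lt_ss' e;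
    have := spider_sum_mono F lt_ss' (sidx_le _); rewrite e ltnn.
- by move: (spider_neq_Hvertex s u); rewrite e eqxx.
- by move: (spider_neq_Hvertex s' t); rewrite e eqxx.
- by rewrite (Hvertex_sum_inj e).
Qed.

End Corona.

Theorem theorem3 (p : nat) (T : finType) (part : T -> 'I_(3 * p)) (eH : rel T) :
  2 < p ->
  H_family part eH ->
  (* each H_i has at least two vertices *)
  (forall i : 'I_(3 * p), 2 <= #|Hverts part i|) ->
  (* each H_i is connected *)
  (forall u v : T, part u = part v -> connect eH u v) ->
  (* m_1 <= m_2 <= ... <= m_{3p} *)
  (forall i j : 'I_(3 * p), i <= j -> #|Hverts part i| <= #|Hverts part j|) ->
  (* (i) Delta(H_i) <= delta(H_{i+1}) *)
  (forall (i : nat) (u v : T), i.+1 < 3 * p ->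
      u \in Hverts part i -> v \in Hverts part i.+1 -> deg eH u <= deg eH v) ->
  (* (ii) d'(x_p) <= delta'(H_2), d'(y_p) <= delta'(H_3), d'(z_p) <= delta'(H_4) *)
  (forall v, v \in Hverts part 1 ->
      deg (Gamma_adj part eH) (inl (legv p 0 p)) <= deg (Gamma_adj part eH) (inr v)) ->
  (forall v, v \in Hverts part 2 ->
      deg (Gamma_adj part eH) (inl (legv p 1 p)) <= deg (Gamma_adj part eH) (inr v)) ->
  (forall v, v \in Hverts part 3 ->
      deg (Gamma_adj part eH) (inl (legv p 2 p)) <= deg (Gamma_adj part eH) (inr v)) ->
  (* (iii) Delta'(H_{3p-3}) <= |V(H_4)| + 1 *)
  (forall u, u \in Hverts part (3 * p - 4) ->
      deg (Gamma_adj part eH) (inr u) <= #|Hverts part 3| + 1) ->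
  (* (iv) d'(z_2) <= delta'(H_{3p-2}) *)
  (forall v, v \in Hverts part (3 * p - 3) ->
      deg (Gamma_adj part eH) (inl (legv p 2 2)) <= deg (Gamma_adj part eH) (inr v)) ->
  antimagic (Gamma_adj part eH).
Proof.
move=> p_gt2 H_fam Hverts_ge2 _ card_mono deg_mono _ _ _ _ _.
apply: Gamma_antimagic (ltnW p_gt2) H_fam _ card_mono deg_mono => i.
exact: leq_trans (Hverts_ge2 i).
Qed.
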